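(* Let $\mathbb{G}$ be a homogeneous group of homogeneous dimension $Q\geq 3$ and let $|\cdot|$ be any homogeneous quasi-norm on $\mathbb{G}$. Then for every complex-valued $f\in C_0^\infty(\mathbb{G}\setminus\{0\})$ and every $\alpha\in\mathbb{R}$, $$\left\|\frac{1}{|x|^{\alpha}}\mathcal{R} f\right\|^{2}_{L^{2}(\mathbb{G})}-\left(\frac{Q-2}{2}-\alpha\right)^{2}\left\|\frac{f}{|x|^{\alpha+1}}\right\|^{2}_{L^{2}(\mathbb{G})}=\left\|\frac{1}{|x|^{\alpha}}\mathcal{R} f+\frac{Q-2-2\alpha}{2|x|^{\alpha+1}}f\right\|^{2}_{L^{2}(\mathbb{G})}.$$
   Context: A homogeneous group $\mathbb{G}$ is a Lie group whose underlying manifold is $\mathbb{R}^n$, equipped with dilations $D_\lambda(x)=(\lambda^{\nu_1}x_1,\dots,\lambda^{\nu_n}x_n)$, $\nu_1,\dots,\nu_n>0$, such that each $D_\lambda$ ($\lambda>0$) is a group automorphism. Its homogeneous dimension is $Q=\nu_1+\dots+\nu_n$. The Haar measure $dx$ on $\mathbb{G}$ is Lebesgue measure on $\mathbb{R}^n$, and $L^2(\mathbb{G})$ is taken with respect to it. A homogeneous quasi-norm is a continuous function $x\mapsto|x|\in[0,\infty)$ with $|x^{-1}|=|x|$, $|D_\lambda x|=\lambda|x|$ for all $\lambda>0$, and $|x|=0$ iff $x=0$ (here $0$ is the identity). The radial derivative $\mathcal{R}$ is defined for $x\neq 0$ by $\mathcal{R}f(x)=\frac{d}{dr}\big[f(D_r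 y)\big]\big|_{r=|x|}$, where $y=D_{1/|x|}x$ lies on the unit quasi-sphere $\{|y|=1\}$; i.e. $\mathcal{R}=\frac{d}{d|x|}$ is differentiation along the dilation orbits with respect to $r=|x|$. *)

From Stdlib Require Import Reals.
From mathcomp Require Import ssreflect ssrfun ssrbool eqtype ssrnat fintype bigop.
Open Scope R_scope.

Definition vec (m : nat) := 'I_m -> R.

Definition vzero (m : nat) : vec m := fun _ => 0.

Definition upd {m : nat} (x : vec m) (i : 'I_m) (t : R) : vec m :=
  fun j => if j == i then t else x j.

Definition updn {m : nat} (x : vec m) (k : nat) (t : R) : vec m :=
  fun j => if (nat_of_ord j == k)%N then t else x j.

Definition cont_vec {m : nat} (g : vec m -> R) : Prop :=
  forall (x : vec m) (eps : R), 0 < eps -> exists delta, 0 < delta /\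
    forall y : vec m, (forall i, Rabs (y i - x i) < delta) -> Rabs (g y - g x) < eps.

Fixpoint Ck (m k : nat) (g : vec m -> R) : Prop :=
  match k with
  | O => cont_vec g
  | S k' => cont_vec g /\
      forall i : 'I_m, exists g' : vec m -> R,
        (forall x, derivable_pt_lim (fun t => g (upd x i t)) (x i) (g' x)) /\
        Ck m k' g'
  end.

Definition smooth {m : nat} (g : vec m -> R) : Prop := forall k, Ck m k g.

Definition smooth_map {m p : nat} (F : vec m -> vec p) : Prop :=
  forall i : 'I_p, smooth (fun x => F x i).

(* the pair (x,y) of R^n x R^n as a point of R^(n+n) *)
Definition vfst {n : nat} (z : vec (n + n)) : vec n := fun j => z (lshift n j).
Definition vsnd {n : nat} (z : vec (n + n)) : vec n := fun j => z (rshift n j).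

(* improper Riemann integral over R (symmetric exhaustion) *)
Definition ImproperInt (h : R -> R) (I : R) : Prop :=
  (forall a b, inhabited (Riemann_integrable h a b)) /\
  forall eps, 0 < eps -> exists M0, forall M (pr : Riemann_integrable h (- M) M),
    M0 < M -> Rabs (RiemannInt pr - I) < eps.

(* iterated integral over the first k coordinates, the others fixed by x *)
Fixpoint IntIter (n k : nat) (g : vec n -> R) (x : vec n) (I : R) : Prop :=
  match k with
  | O => I = g x
  | S k' => exists h : R -> R,
      (forall t, IntIter n k' g (updn x k' t) (h t)) /\ ImproperInt h I
  end.

(* "the Lebesgue integral of g over R^n equals I" (for the continuous compactly
   supported integrands used here, iterated integrals compute it) *)
Definition LebInt (n : nat) (g : vec n -> R) (I : R) : Prop :=
  IntIter n n g (vzero n) I.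

Definition dil {n : nat} (nu : 'I_n -> R) (lam : R) (x : vec n) : vec n :=
  fun i => Rpower lam (nu i) * x i.

Definition homdim {n : nat} (nu : 'I_n -> R) : R := \big[Rplus/0]_(i < n) nu i.

Definition homogeneous_group {n : nat} (mul : vec n -> vec n -> vec n)
  (inv : vec n -> vec n) (nu : 'I_n -> R) : Prop :=
  (forall x y z, mul (mul x y) z = mul x (mul y z)) /\
  (forall x, mul x (vzero n) = x /\ mul (vzero n) x = x) /\
  (forall x, mul x (inv x) = vzero n /\ mul (inv x) x = vzero n) /\
  smooth_map (fun z : vec (n + n) => mul (vfst z) (vsnd z)) /\
  smooth_map inv /\
  (forall i, 0 < nu i) /\
  (forall lam x y, 0 < lam -> dil nu lam (mul x y) = mul (dil nu lam x) (dil nu lam y)).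

Definition hom_quasi_norm {n : nat} (inv : vec n -> vec n) (nu : 'I_n -> R)
  (N : vec n -> R) : Prop :=
  cont_vec N /\
  (forall x, 0 <= N x) /\
  (forall x, N (inv x) = N x) /\
  (forall lam x, 0 < lam -> N (dil nu lam x) = lam * N x) /\
  (forall x, N x = 0 <-> x = vzero n).

(* f in C_0^infty(G \ {0}) (real-valued component): smooth, vanishing outside a
   bounded set and in a neighbourhood of 0 *)
Definition Cc_infty_punctured {n : nat} (f : vec n -> R) : Prop :=
  smooth f /\ exists Rb r, 0 < r /\ 0 < Rb /\
    forall x, ((exists i, Rb < Rabs (x i)) \/ (forall i, Rabs (x i) < r)) -> f x = 0.

(* Rf is the radial derivative of f: for x <> 0,
   Rf x = d/dr [f (D_r y)] at r = |x|, with y = D_{1/|x|} x.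
   Convention: Rf 0 = 0 (f vanishes near 0). *)
Definition radial_deriv {n : nat} (nu : 'I_n -> R) (N : vec n -> R)
  (f Rf : vec n -> R) : Prop :=
  Rf (vzero n) = 0 /\
  forall x, x <> vzero n ->
    derivable_pt_lim (fun r => f (dil nu r (dil nu (/ N x) x))) (N x) (Rf x).

(* Write |x| for N x and E g := |x| R g for the Euler derivative, the generator of the
   dilations: d/dλ g(D_λ x) = (E g)(D_λ x) / λ.  Lebesgue measure scales as
   ∫ g(D_λ x) dx = λ^-Q ∫ g, so differentiating at λ = 1 gives ∫ E g = -Q ∫ g for every
   continuous compactly supported g with continuous E g.  Differentiation under the
   integral sign is justified by showing that the difference quotients
   (g(D_λ x) - g x) / (λ - 1), extended by E g at λ = 1, are jointly continuous in (λ, x),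
   and that an iterated integral of a jointly continuous family with a common compact
   support depends continuously on the parameter.  For g = |f|² / |x|^(2α+2) one finds
   E g = 2 Re(f̄ Rf) / |x|^(2α+1) - (2α+2) g, hence
   2 ∫ Re(f̄ Rf) / |x|^(2α+1) = (2α+2-Q) ∫ |f|² / |x|^(2α+2), and expanding the square on
   the right-hand side of the identity gives the theorem.  That Rf is continuous follows
   from the chain rule |x| Rf = Σ_i ν_i x_i ∂_i f. *)

From Stdlib Require Import Reals Lra FunctionalExtensionality ClassicalEpsilon Classical.
From Coquelicot Require Import Coquelicot.
From HB Require Import structures.
From mathcomp Require Import ssreflect ssrfun ssrbool eqtype ssrnat fintype bigop seq.
Open Scope R_scope.

Lemma eq_of_Rabs_sub_lt (a b : R) : (forall eps, 0 < eps -> Rabs (a - b) < eps) -> a = b.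
Proof.
move=> H; case: (Req_dec a b) => // ne.
have hp : 0 < Rabs (a - b) by apply: Rabs_pos_lt; lra.
have := H _ hp; lra.
Qed.

Lemma MVT_between (F F' : R -> R) a b :
  (forall t, Rmin a b <= t <= Rmax a b -> derivable_pt_lim F t (F' t)) ->
  exists c, F b - F a = F' c * (b - a) /\ Rmin a b <= c <= Rmax a b.
Proof.
move=> H; case: (Rtotal_order a b) => [lt|[<-|gt]].
- rewrite Rmin_left ?Rmax_right in H *; try lra.
  case: (MVT_cor2 F F' a b lt H) => c [E hc]; exists c; split; lra.
- exists a; rewrite Rmin_left ?Rmax_left; lra.
- rewrite Rmin_right ?Rmax_left in H *; try lra.
  case: (MVT_cor2 F F' b a gt H) => c [E hc]; exists c; split; lra.
Qed.

Lemma Rpower_gt0 a e : 0 < Rpower a e.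
Proof. exact: exp_pos. Qed.

Lemma Rpower_base_1 e : Rpower 1 e = 1.
Proof. by rewrite /Rpower ln_1 Rmult_0_r exp_0. Qed.

Lemma Rpower_inv_base a e : 0 < a -> Rpower (/ a) e = / Rpower a e.
Proof. by move=> Ha; rewrite -Rpower_Ropp /Rpower ln_Rinv //; congr exp; ring. Qed.

Lemma Rpower_sub_1 a e : 0 < a -> Rpower a (e - 1) = Rpower a e / a.
Proof. by move=> Ha; rewrite /Rminus Rpower_plus Rpower_Ropp Rpower_1. Qed.

Lemma ball_Rabs (x y : R) e : ball x e y <-> Rabs (y - x) < e.
Proof. by []. Qed.

Lemma derivable_pt_lim_mul_r c m : derivable_pt_lim (fun l => l * c) m c.
Proof.
by have := derivable_pt_lim_scal_right id m 1 c (derivable_pt_lim_id m); rewrite Rmult_1_l.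
Qed.

Lemma diff_quot_limit (F f : R -> R) x0 d L : 0 < d -> continuous F x0 ->
  derivable_pt_lim f x0 L ->
  (forall x, x <> x0 -> Rabs (x - x0) < d -> F x = (f x - f x0) / (x - x0)) -> F x0 = L.
Proof.
move=> Hd HF Hf HFf; apply: eq_of_Rabs_sub_lt => eps Heps.
case/filterlim_locally/(_ (pos_div_2 (mkposreal _ Heps))): HF => d1 Hd1.
case: (Hf (eps / 2)); [lra | move=> d2 Hd2].
set h := Rmin d (Rmin d1 d2) / 2.
have Hmin : 0 < Rmin d (Rmin d1 d2) by repeat apply: Rmin_pos; try apply: cond_pos.
have Hh : 0 < h /\ h < d /\ h < d1 /\ h < d2.
  have := Rmin_l d (Rmin d1 d2); have := Rmin_r d (Rmin d1 d2).
  have := Rmin_l d1 d2; have := Rmin_r d1 d2; rewrite /h; lra.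
have Rh : Rabs h = h by apply: Rabs_pos_eq; lra.
have c1 : Rabs (F (x0 + h) - F x0) < eps / 2.
  by apply: (Hd1 (x0 + h)); apply/ball_Rabs; rewrite (_ : x0 + h - x0 = h) ?Rh; [lra | ring].
have c2 : Rabs ((f (x0 + h) - f x0) / h - L) < eps / 2 by apply: Hd2; [lra | rewrite Rh; lra].
have Eh : x0 + h - x0 = h by ring.
rewrite HFf ?Eh ?Rh in c1; try lra.
have -> : F x0 - L = - ((f (x0 + h) - f x0) / h - F x0) + ((f (x0 + h) - f x0) / h - L) by ring.
apply: Rle_lt_trans (Rabs_triang _ _) _; rewrite Rabs_Ropp; lra.
Qed.

Lemma ex_RInt_lin (f g : R -> R) a b c d : ex_RInt f a b -> ex_RInt g a b ->
  ex_RInt (fun t => c * f t + d * g t) a b.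
Proof.
move=> Hf Hg.
exact: (ex_RInt_plus (fun t => scal c (f t)) (fun t => scal d (g t)) a b
  (ex_RInt_scal _ _ _ _ Hf) (ex_RInt_scal _ _ _ _ Hg)).
Qed.

Lemma RInt_lin (f g : R -> R) a b c d : ex_RInt f a b -> ex_RInt g a b ->
  RInt (fun t => c * f t + d * g t) a b = c * RInt f a b + d * RInt g a b.
Proof.
move=> Hf Hg.
rewrite (RInt_plus (fun t => scal c (f t)) (fun t => scal d (g t)) a b
  (ex_RInt_scal _ _ _ _ Hf) (ex_RInt_scal _ _ _ _ Hg)).
by rewrite (RInt_scal _ _ _ _ Hf) (RInt_scal _ _ _ _ Hg).
Qed.

(** * Improper and iterated integrals *)

Lemma ImproperInt_is_lim h I : ImproperInt h I <->
  (forall a b, ex_RInt h a b) /\ is_lim (fun M => RInt h (- M) M) p_infty I.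
Proof.
rewrite -is_lim_spec; split=> -[Hi Hl]; split.
- by move=> a b; case: (Hi a b) => pr; exact: ex_RInt_Reals_1 pr.
- move=> eps; case: (Hl eps (cond_pos eps)) => M0 HM0; exists M0 => M HM.
  by case: (Hi (- M) M) => pr; rewrite (RInt_Reals _ _ _ pr); exact: HM0.
- by move=> a b; constructor; exact: ex_RInt_Reals_0.
- move=> eps Heps; case: (Hl (mkposreal _ Heps)) => M0 HM0; exists M0 => M pr HM.
  by rewrite -(RInt_Reals _ _ _ pr); exact: HM0.
Qed.

Lemma ImproperInt_lin h1 h2 I1 I2 c d : ImproperInt h1 I1 -> ImproperInt h2 I2 ->
  ImproperInt (fun t => c * h1 t + d * h2 t) (c * I1 + d * I2).
Proof.
move=> /ImproperInt_is_lim [E1 L1] /ImproperInt_is_lim [E2 L2].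
apply/ImproperInt_is_lim; split=> [a b|]; first exact: ex_RInt_lin.
apply: (is_lim_ext (fun M => c * RInt h1 (- M) M + d * RInt h2 (- M) M)).
  by move=> M; rewrite RInt_lin.
exact: (is_lim_plus' _ _ _ _ _ (is_lim_scal_l _ c _ _ L1) (is_lim_scal_l _ d _ _ L2)).
Qed.

Lemma ImproperInt_scal h I c : ImproperInt h I -> ImproperInt (fun t => c * h t) (c * I).
Proof.
move=> /ImproperInt_is_lim [E L]; apply/ImproperInt_is_lim; split.
  by move=> a b; apply: ex_RInt_ext (ex_RInt_scal _ _ _ c (E a b)).
apply: (is_lim_ext (fun M => c * RInt h (- M) M)); last exact: is_lim_scal_l _ c _ _ L.
by move=> M; symmetry; exact: (RInt_scal _ _ _ c (E _ _)).
Qed.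

Lemma ImproperInt_unique h I J : ImproperInt h I -> ImproperInt h J -> I = J.
Proof.
move=> /ImproperInt_is_lim [_ /is_lim_unique LI] /ImproperInt_is_lim [_ /is_lim_unique LJ].
by move: LJ; rewrite LI => -[].
Qed.

Lemma ImproperInt_comp_scal h I a : 0 < a -> ImproperInt h I ->
  ImproperInt (fun t => h (a * t)) (I / a).
Proof.
move=> Ha /ImproperInt_is_lim [E L].
have ex_scaled x y : ex_RInt (fun t => h (a * t)) x y.
  apply: (ex_RInt_ext (fun t => scal (/ a) (scal a (h (a * t + 0))))).
    by move=> t _; rewrite /scal /= /mult /= Rplus_0_r; field; lra.
  exact/ex_RInt_scal/ex_RInt_comp_lin/E.
have RInt_scaled (M : R) : RInt (fun t => h (a * t)) (- M) M = / a * RInt h (- (a * M)) (a * M).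
  rewrite -(RInt_ext (fun t => scal (/ a) (scal a (h (a * t + 0))))); last first.
    by move=> t _; rewrite /scal /= /mult /= Rplus_0_r; field; lra.
  rewrite RInt_scal; last exact/ex_RInt_comp_lin/E.
  rewrite RInt_comp_lin; last exact: E.
  by rewrite /scal /= /mult /= !Rplus_0_r Ropp_mult_distr_r.
have to_infty : is_lim (fun M => a * M) p_infty p_infty.
  apply/is_lim_spec => M0; exists (M0 / a) => M HM.
  by apply: (Rmult_lt_reg_l (/ a)); [exact: Rinv_0_lt_compat | field_simplify; lra].
apply/ImproperInt_is_lim; split=> //.
apply: (is_lim_ext (fun M => / a * RInt h (- (a * M)) (a * M))) => [M|].
  by rewrite RInt_scaled.
rewrite /Rdiv Rmult_comm.
apply: (is_lim_scal_l (fun M => RInt h (- (a * M)) (a * M)) (/ a) _ I).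
apply: (is_lim_comp (fun M => RInt h (- M) M)) L to_infty _.
by exists 0.
Qed.

Lemma ImproperInt_compact_support h B : 0 <= B -> (forall a b, ex_RInt h a b) ->
  (forall t, B < Rabs t -> h t = 0) -> ImproperInt h (RInt h (- B) B).
Proof.
move=> HB E Z; apply/ImproperInt_is_lim; split=> //.
apply: (is_lim_ext_loc (fun _ => RInt h (- B) B)); last exact: is_lim_const.
exists B => M HM.
have RInt_zero a b : (forall t, Rmin a b < t < Rmax a b -> h t = 0) -> RInt h a b = 0.
  move=> H0; rewrite (RInt_ext h (fun _ => 0)) //.
  by rewrite RInt_const /scal /= /mult /= Rmult_0_r.
rewrite -(RInt_Chasles h (- M) (- B) M) // -(RInt_Chasles h (- B) B M) //.
rewrite (RInt_zero (- M) (- B)) ?(RInt_zero B M) ?plus_zero_l ?plus_zero_r //.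
- move=> t; rewrite Rmin_left ?Rmax_right; try lra.
  by move=> ht; apply: Z; rewrite Rabs_right; lra.
- move=> t; rewrite Rmin_left ?Rmax_right; try lra.
  by move=> ht; apply: Z; rewrite Rabs_left; lra.
Qed.

Section IntIter.
Variable n : nat.

Lemma IntIter_ext k (g g' : vec n -> R) x I : (forall y, g y = g' y) ->
  IntIter n k g x I -> IntIter n k g' x I.
Proof.
move=> E; elim: k x I => [|k IH] x I /=; first by rewrite E.
by case=> h [Hh Hi]; exists h; split=> // t; apply: IH.
Qed.

Lemma IntIter_lin k (g1 g2 : vec n -> R) c d x I1 I2 :
  IntIter n k g1 x I1 -> IntIter n k g2 x I2 ->
  IntIter n k (fun y => c * g1 y + d * g2 y) x (c * I1 + d * I2).
Proof.
elim: k x I1 I2 => [|k IH] x I1 I2 /=; first by move=> -> ->.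
case=> h1 [H1 E1] [h2 [H2 E2]].
exists (fun t => c * h1 t + d * h2 t); split; last exact: ImproperInt_lin.
by move=> t; apply: IH.
Qed.

Lemma IntIter_unique k (g : vec n -> R) x I J :
  IntIter n k g x I -> IntIter n k g x J -> I = J.
Proof.
elim: k x I J => [|k IH] x I J /=; first by move=> -> ->.
case=> h1 [H1 E1] [h2 [H2 E2]].
have E : h1 = h2 by apply: functional_extensionality => t; exact: IH (H1 t) (H2 t).
by subst h2; exact: ImproperInt_unique E1 E2.
Qed.

End IntIter.

HB.instance Definition _ := Monoid.isComLaw.Build R 1 Rmult
  (fun x y z => esym (Rmult_assoc x y z)) Rmult_comm Rmult_1_l.
HB.instance Definition _ := Monoid.isComLaw.Build R 0 Rplus
  (fun x y z => esym (Rplus_assoc x y z)) Rplus_comm Rplus_0_l.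

Lemma big_ord_lt_recr {T : Type} {idx : T} (op : Monoid.com_law idx) n (F : 'I_n -> T)
  (o : 'I_n) : \big[op/idx]_(i < n | (i < o.+1)%N) F i
    = op (F o) (\big[op/idx]_(i < n | (i < o)%N) F i).
Proof.
rewrite (bigD1 o) /= ?ltnS ?leqnn //; congr (op _ _); apply: eq_bigl => i.
by rewrite ltnS (ltn_neqAle i o) andbC.
Qed.

Definition vscale {n} (c : 'I_n -> R) (x : vec n) : vec n := fun i => c i * x i.

Lemma IntIter_vscale n (c : 'I_n -> R) (g : vec n -> R) k x I : (forall i, 0 < c i) ->
  (k <= n)%N -> IntIter n k g (vscale c x) I ->
  IntIter n k (fun y => g (vscale c y)) x (I / \big[Rmult/1]_(i < n | (i < k)%N) c i).
Proof.
move=> Hc; elim: k x I => [|k IH] x I Hk /=.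
  by rewrite big_pred0 // => ->; field.
case=> h [Hh Hi].
set o : 'I_n := Ordinal Hk.
set P := \big[Rmult/1]_(i < n | (i < k)%N) c i.
have HP : 0 < P by apply: (big_ind (fun x => 0 < x)) => //; [lra | exact: Rmult_lt_0_compat].
have Hco := Hc o.
exists (fun t => / P * h (c o * t)); split.
  move=> t; rewrite Rmult_comm; apply: IH (ltnW Hk) _.
  suff -> : vscale c (updn x k t) = updn (vscale c x) k (c o * t) by exact: Hh.
  apply: functional_extensionality => j; rewrite /vscale /updn.
  by case: eqP => [Ej|//]; rewrite (_ : j = o) //; apply: val_inj.
rewrite (big_ord_lt_recr _ _ _ o) -/P.
have -> : I / (c o * P) = / P * (I / c o) by field; lra.
exact/ImproperInt_scal/ImproperInt_comp_scal.
Qed.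

(** * Continuity on R^n *)

Lemma cont_vec_continuous {n} (g : vec n -> R) : cont_vec g <-> forall x, continuous g x.
Proof.
split=> H x.
- apply/filterlim_locally => eps; case: (H x eps (cond_pos eps)) => d [Hd Hy].
  by exists (mkposreal d Hd) => y Hxy; apply: Hy.
- move=> eps Heps; case/filterlim_locally/(_ (mkposreal eps Heps)): (H x) => d Hd.
  by exists d; split=> [|y Hy]; [exact: cond_pos | apply: Hd].
Qed.

Lemma filter_forall_ord {T} {F : (T -> Prop) -> Prop} {FF : Filter F} n
  (P : 'I_n -> T -> Prop) : (forall i, F (P i)) -> F (fun y => forall i, P i y).
Proof.
move=> H.
suff Hs (s : seq 'I_n) : F (fun y => forall i, i \in s -> P i y).
  apply: filter_imp (Hs (enum 'I_n)) => y Hy i.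
  by apply: Hy; rewrite mem_enum.
elim: s => [|a s IH]; first by apply: filter_forall => y i; rewrite in_nil.
apply: filter_imp (filter_and _ _ (H a) IH) => y [Ha Hs] i.
by rewrite in_cons => /orP [/eqP ->|/Hs].
Qed.

Lemma continuous_vec {U : UniformSpace} {n} (f : U -> vec n) x :
  (forall i, continuous (fun p => f p i) x) -> continuous f x.
Proof.
move=> H; apply/filterlim_locally => eps.
apply: (filter_forall_ord n (fun i p => ball (f x i) eps (f p i))) => i.
exact: (proj1 (filterlim_locally _ _) (H i) eps).
Qed.

Lemma continuous_coord {n} (i : 'I_n) (x : vec n) : continuous (fun y : vec n => y i) x.
Proof. by apply/filterlim_locally => eps; exists eps => y; apply. Qed.

Lemma continuous_of_uncurry {U V W : UniformSpace} (h : U -> V -> W) u v :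
  continuous (fun q : U * V => h q.1 q.2) (u, v) -> continuous (h u) v.
Proof.
exact: (continuous_comp_2 (fun _ => u) (fun s => s) h v (continuous_const _ _) (continuous_id _)).
Qed.

Lemma continuous_Rpower e r : 0 < r -> continuous (fun s => Rpower s e) r.
Proof.
move=> Hr; apply: ex_derive_continuous; exists (e * Rpower r (e - 1)).
by apply/is_derive_Reals; exact: derivable_pt_lim_power.
Qed.

Lemma continuous_sq {U : UniformSpace} (h : U -> R) x :
  continuous h x -> continuous (fun y => h y ^ 2) x.
Proof.
move=> Hh; apply: (continuous_ext (fun y => h y * h y)) => [y|]; first by rewrite /= Rmult_1_r.
exact: continuous_mult.
Qed.

Lemma continuous_big_sum {U : UniformSpace} {I : eqType} (s : seq I) (F : I -> U -> R) x :
  (forall i, continuous (F i) x) -> continuous (fun y => \big[Rplus/0]_(i <- s) F i y) x.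
Proof.
move=> H; elim: s => [|a s IH].
  by apply: (continuous_ext (fun _ => 0)) => [y|]; [rewrite big_nil | exact: continuous_const].
apply: (continuous_ext (fun y => F a y + \big[Rplus/0]_(i <- s) F i y)) => [y|].
  by rewrite big_cons.
exact: continuous_plus.
Qed.

Lemma locally_coord_lt {n} (x : vec n) i r : Rabs (x i) < r ->
  locally x (fun y => Rabs (y i) < r).
Proof.
move=> H; apply: (continuous_comp (fun y : vec n => y i) Rabs x (continuous_coord i x)
  (continuous_Rabs _) (fun z => z < r)).
exact: open_lt.
Qed.

Lemma locally_coord_gt {n} (x : vec n) i B : B < Rabs (x i) ->
  locally x (fun y => B < Rabs (y i)).
Proof.
move=> H; apply: (continuous_comp (fun y : vec n => y i) Rabs x (continuous_coord i x)
  (continuous_Rabs _) (fun z => B < z)).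
exact: open_gt.
Qed.

(** * Integrals depending continuously on a parameter *)

Lemma uniform_on_interval (a b : R) (Good : R -> R -> Prop) :
  (forall s d d', 0 < d' <= d -> Good s d -> Good s d') ->
  (forall t, a <= t <= b -> exists d, 0 < d /\ forall s, Rabs (s - t) < d -> Good s d) ->
  exists d, 0 < d /\ forall s, a <= s <= b -> Good s d.
Proof.
move=> Mono Loc.
have Loc' t : exists d, 0 < d /\ (a <= t <= b -> forall s, Rabs (s - t) < d -> Good s d).
  case: (classic (a <= t <= b)) => [/Loc [d [Hd Hs]]|ht]; first by exists d.
  by exists 1; split=> [|/ht]; first lra.
case/choice: Loc' => dl dlP.
case: (compactness_value_1d a b (fun t => mkposreal _ (proj1 (dlP t)))) => d Hd.
exists d; split=> [|s hs]; first exact: cond_pos.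
apply: NNPP => NG; apply: (Hd s hs) => -[t [ht [hst hdt]]].
apply/NG/(Mono s (dl t)); first by split; [exact: cond_pos | exact: hdt].
exact: (proj2 (dlP t)).
Qed.

Lemma continuous_RInt_param {P : UniformSpace} (H : P -> R -> R) a b p0 : a <= b ->
  (forall p t, continuous (fun q : P * R => H q.1 q.2) (p, t)) ->
  continuous (fun p => RInt (H p) a b) p0.
Proof.
move=> Hab HC.
have Hex p : ex_RInt (H p) a b.
  by apply: ex_RInt_continuous => t _; apply: continuous_of_uncurry.
apply/filterlim_locally => eps.
set e := eps / (b - a + 1).
have He : 0 < e by apply: Rdiv_lt_0_compat; [exact: cond_pos | lra].
case: (uniform_on_interval a b (fun s d => forall p, ball p0 d p -> Rabs (H p s - H p0 s) < e)).
- by move=> s d d' hd Hg p hp; apply: Hg; apply: ball_le hp; lra.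
- move=> t _.
  case/filterlim_locally/(_ (pos_div_2 (mkposreal e He))): (HC p0 t) => d Hd.
  exists d; split=> [|s hs p hp]; first exact: cond_pos.
  have c1 : Rabs (H p s - H p0 t) < e / 2 by exact: (Hd (p, s)).
  have c2 : Rabs (H p0 s - H p0 t) < e / 2 by exact: (Hd (p0, s) (conj (ball_center _ _) hs)).
  have -> : H p s - H p0 s = (H p s - H p0 t) - (H p0 s - H p0 t) by ring.
  by apply: Rle_lt_trans (Rabs_triang _ _) _; rewrite Rabs_Ropp; lra.
- move=> d [Hd Hu]; exists (mkposreal d Hd) => p hp.
  change (Rabs (RInt (H p) a b - RInt (H p0) a b) < eps).
  have -> : RInt (H p) a b - RInt (H p0) a b = RInt (fun t => 1 * H p t + -1 * H p0 t) a b.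
    by rewrite RInt_lin //; ring.
  have Hex' := ex_RInt_lin _ _ _ _ 1 (-1) (Hex p) (Hex p0).
  apply: Rle_lt_trans (abs_RInt_le_const _ a b e Hab Hex' _) _.
    move=> t ht; rewrite (_ : 1 * _ + -1 * _ = H p t - H p0 t); last ring.
    exact/Rlt_le/Hu.
  have := cond_pos eps; rewrite /e => Heps.
  apply: (Rmult_lt_reg_r (b - a + 1)); first lra.
  by field_simplify; lra.
Qed.

Definition jointly_continuous {P : UniformSpace} {n} (G : P -> vec n -> R) :=
  forall p x, continuous (fun q : P * vec n => G q.1 q.2) (p, x).

Lemma updn_at {n} (x : vec n) k t (o : 'I_n) : nat_of_ord o = k -> updn x k t o = t.
Proof. by move=> Ho; rewrite /updn Ho eqxx. Qed.

Lemma updn_other {n} (x : vec n) k t (i : 'I_n) : nat_of_ord i <> k -> updn x k t i = x i.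
Proof. by move=> Hi; rewrite /updn; case: eqP. Qed.

Lemma continuous_updn {U : UniformSpace} {n} (x : U -> vec n) (t : U -> R) k u :
  continuous x u -> continuous t u -> continuous (fun v => updn (x v) k (t v)) u.
Proof.
move=> Hx Ht; apply: continuous_vec => i; rewrite /updn; case: eqP => // _.
exact: continuous_comp Hx (continuous_coord i _).
Qed.

Section ParamIntegral.
Context {P : UniformSpace} (n : nat) (G : P -> vec n -> R) (B : R).
Hypothesis HB : 0 <= B.
Hypothesis HG : jointly_continuous G.
Hypothesis HGB : forall p x, (exists i, B < Rabs (x i)) -> G p x = 0.

Lemma IntIter_param k : (k <= n)%N -> exists F : P -> vec n -> R, jointly_continuous F /\
  (forall p x, (exists i : 'I_n, (k <= i)%N /\ B < Rabs (x i)) -> F p x = 0) /\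
  forall p x, IntIter n k (G p) x (F p x).
Proof.
elim: k => [_|k IH Hk].
  by exists G; split=> //; split=> [p x [i [_ hi]]|//]; apply: HGB; exists i.
case: (IH (ltnW Hk)) => F [FC [FS FI]].
set o : 'I_n := Ordinal Hk.
have Fline_cont (q : P * vec n) t :
    continuous (fun r : (P * vec n) * R => F r.1.1 (updn r.1.2 k r.2)) (q, t).
  case: q => p x.
  apply: (continuous_comp_2 (fun r : (P * vec n) * R => r.1.1)
            (fun r => updn r.1.2 k r.2) F) => /=; last exact: FC.
    exact: continuous_comp (continuous_fst _ _) (continuous_fst _ _).
  apply: continuous_updn; last exact: continuous_snd.
  exact: continuous_comp (continuous_fst _ _) (continuous_snd _ _).
exists (fun p x => RInt (fun t => F p (updn x k t)) (- B) B); split; last split.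
- move=> p x; apply: (continuous_RInt_param (fun q t => F q.1 (updn q.2 k t))); first lra.
  by move=> q t; exact: Fline_cont.
- move=> p x [i [hi hx]].
  rewrite (RInt_ext _ (fun _ => 0)) => [|t _]; last first.
    apply: FS; exists i; split; first exact: ltnW.
    by rewrite updn_other // => E; move: hi; rewrite E ltnn.
  by rewrite RInt_const /scal /= /mult /= Rmult_0_r.
- move=> p x; exists (fun t => F p (updn x k t)); split=> [t|]; first exact: FI.
  apply: ImproperInt_compact_support => // [a b|t ht].
    apply: ex_RInt_continuous => t _.
    exact: (continuous_of_uncurry (fun (q : P * vec n) t => F q.1 (updn q.2 k t)) (p, x) t).
  by apply: FS; exists o; split=> //; rewrite updn_at.
Qed.

Lemma LebInt_param :
  exists F : P -> R, (forall p, continuous F p) /\ forall p, LebInt n (G p) (F p).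
Proof.
case: (IntIter_param n (leqnn n)) => F [FC [_ FI]].
exists (fun p => F p (vzero n)); split=> [p|p]; last exact: FI.
exact: (continuous_comp_2 (fun p => p) (fun _ => vzero n) F p
  (continuous_id _) (continuous_const _ _)).
Qed.

End ParamIntegral.

Lemma LebInt_exists n (g : vec n -> R) B : 0 <= B -> cont_vec g ->
  (forall x, (exists i, B < Rabs (x i)) -> g x = 0) -> exists I, LebInt n g I.
Proof.
move=> HB /cont_vec_continuous Hg HgB.
have HG : jointly_continuous (fun (_ : R_UniformSpace) x => g x).
  by move=> p x; exact: continuous_comp (continuous_snd _ _) (Hg x).
case: (LebInt_param n _ B HB HG) => [p x /HgB //|F [_ FI]].
by exists (F 0).
Qed.

(* The complement of the shell {x | r <= max_i |x i| <= B}. *)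
Definition off_shell {n} (B r : R) (x : vec n) :=
  (exists i, B < Rabs (x i)) \/ (forall i, Rabs (x i) < r).

Lemma off_shell_open {n} B r (x : vec n) : off_shell B r x -> locally x (off_shell B r).
Proof.
case=> [[i hi]|hr].
  by apply: filter_imp (locally_coord_gt x i B hi) => y hy; left; exists i.
apply: filter_imp (filter_forall_ord n _ (fun i => locally_coord_lt x i r (hr i))) => y hy.
by right.
Qed.

Lemma off_shell_vzero {n} B r : 0 < r -> off_shell B r (vzero n).
Proof. by move=> Hr; right=> i; rewrite /vzero Rabs_R0. Qed.

Lemma vanish_near_vzero {n} (f : vec n -> R) B r : 0 < r ->
  (forall x, off_shell B r x -> f x = 0) -> locally (vzero n) (fun y => f y = 0).
Proof. by move=> Hr Hf; apply: filter_imp Hf (off_shell_open B r _ (off_shell_vzero B r Hr)). Qed.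

Lemma continuous_off_vzero {n} (h : vec n -> R) B r : 0 < r ->
  (forall x, x <> vzero n -> continuous h x) -> (forall x, off_shell B r x -> h x = 0) ->
  forall x, continuous h x.
Proof.
move=> Hr Hc H0 x; case: (classic (x = vzero n)) => [->|]; last exact: Hc.
apply: (continuous_ext_loc _ (fun _ => 0)); last exact: continuous_const.
by apply: filter_imp (vanish_near_vzero h B r Hr H0) => y ->.
Qed.

Lemma LebInt_off_shell {n} (h : vec n -> R) B r : 0 <= B -> (forall x, continuous h x) ->
  (forall x, off_shell B r x -> h x = 0) -> exists I, LebInt n h I.
Proof.
move=> HB Hc H0; apply: (LebInt_exists n h B HB); first exact/cont_vec_continuous.
by move=> x Hx; apply: H0; left.
Qed.

Lemma off_shell_mono {n} B B' r r' (x : vec n) : B <= B' -> r' <= r ->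
  off_shell B' r' x -> off_shell B r x.
Proof.
move=> HB Hr [[i hi]|hx]; [left; exists i | right=> i; have := hx i]; lra.
Qed.

Lemma off_shell_and {n} (P P' : vec n -> Prop) :
  (exists B r, 0 <= B /\ 0 < r /\ forall x, off_shell B r x -> P x) ->
  (exists B r, 0 <= B /\ 0 < r /\ forall x, off_shell B r x -> P' x) ->
  exists B r, 0 <= B /\ 0 < r /\ forall x, off_shell B r x -> P x /\ P' x.
Proof.
move=> [B [r [HB [Hr HP]]]] [B' [r' [HB' [Hr' HP']]]].
exists (Rmax B B'), (Rmin r r'); split; [exact: Rle_trans HB (Rmax_l _ _) | split].
  exact: Rmin_pos.
move=> x Hx; split.
  by apply: HP; apply: off_shell_mono Hx; [exact: Rmax_l | exact: Rmin_l].
by apply: HP'; apply: off_shell_mono Hx; [exact: Rmax_r | exact: Rmin_r].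
Qed.

(** * The chain rule *)

Lemma derivable_pt_lim_ext_loc f g x l : locally x (fun y => f y = g y) ->
  derivable_pt_lim f x l -> derivable_pt_lim g x l.
Proof. by move=> E /is_derive_Reals H; apply/is_derive_Reals; exact: is_derive_ext_loc E H. Qed.

Definition partials {n} (f : vec n -> R) (df : 'I_n -> vec n -> R) :=
  forall i x, derivable_pt_lim (fun t => f (upd x i t)) (x i) (df i x).

Lemma upd_at {n} (x : vec n) i t : upd x i t i = t.
Proof. by rewrite /upd eqxx. Qed.

Lemma upd_other {n} (x : vec n) i j t : j != i -> upd x i t j = x j.
Proof. by rewrite /upd => /negbTE ->. Qed.

Lemma upd_upd {n} (x : vec n) i t s : upd (upd x i t) i s = upd x i s.
Proof. by apply: functional_extensionality => j; rewrite /upd; case: eqP. Qed.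

Lemma partials_line {n} (f : vec n -> R) df W o t : partials f df ->
  derivable_pt_lim (fun s => f (upd W o s)) t (df o (upd W o t)).
Proof.
move=> H; have := H o (upd W o t); rewrite upd_at.
by have -> : (fun s => f (upd (upd W o t) o s)) = (fun s => f (upd W o s))
  by apply: functional_extensionality => s; rewrite upd_upd.
Qed.

Lemma partial_increment_deriv {n} (f : vec n -> R) df (w : R -> vec n) o (c : R -> R) r0 dc :
  partials f df -> continuous (df o) (upd (w r0) o (c r0)) -> continuous w r0 ->
  derivable_pt_lim c r0 dc ->
  derivable_pt_lim (fun r => f (upd (w r) o (c r)) - f (upd (w r) o (c r0))) r0
    (df o (upd (w r0) o (c r0)) * dc).
Proof.
move=> Hp Hdf Hw Hc eps Heps.
set D := df o (upd (w r0) o (c r0)).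
have Hmul : continuous (fun z : R * R => z.1 * z.2) (D, dc).
  exact: continuous_mult (continuous_fst _ _) (continuous_snd _ _).
case/filterlim_locally/(_ (mkposreal eps Heps)): Hmul => e He.
case/filterlim_locally/(_ e): Hdf => d1 Hd1.
case/filterlim_locally/(_ d1): Hw => dw Hdw.
have /continuity_pt_filterlim /filterlim_locally /(_ d1) [dcc Hdcc] : continuity_pt c r0.
  by apply: derivable_continuous_pt; exists dc.
case: (Hc e (cond_pos e)) => dq Hdq.
have Hdelta : 0 < Rmin dw (Rmin dcc dq) by repeat apply: Rmin_pos; apply: cond_pos.
exists (mkposreal _ Hdelta) => h hn /= hh.
have hw : Rabs h < dw by apply: Rlt_le_trans hh _; apply: Rmin_l.
have hc : Rabs h < dcc by apply: Rlt_le_trans hh _; apply: Rle_trans (Rmin_r _ _) (Rmin_l _ _).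
have hq : Rabs h < dq by apply: Rlt_le_trans hh _; apply: Rle_trans (Rmin_r _ _) (Rmin_r _ _).
have Eh : r0 + h - r0 = h by ring.
have ball_h : ball r0 dw (r0 + h) /\ ball r0 dcc (r0 + h) by split; apply/ball_Rabs; rewrite Eh.
set W := w (r0 + h).
case: (MVT_between (fun s => f (upd W o s)) (fun s => df o (upd W o s)) (c r0) (c (r0 + h)))
  => [t _|xi [Exi Hxi]]; first exact: partials_line.
have Hxi' : Rabs (xi - c r0) < d1.
  have /ball_Rabs := Hdcc _ (proj2 ball_h).
  by move: Hxi; rewrite /Rmin /Rmax; case: Rle_dec => _ ? ?; split_Rabs; lra.
have HA : Rabs (df o (upd W o xi) - D) < e.
  apply: (Hd1 (upd W o xi)) => i; case: (eqVneq i o) => [->|Ni]; first by rewrite !upd_at.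
  by rewrite !upd_other //; exact: (Hdw _ (proj1 ball_h) i).
have Hq : Rabs ((c (r0 + h) - c r0) / h - dc) < e by exact: Hdq.
rewrite Rminus_diag Rminus_0_r -/W Exi.
have -> : df o (upd W o xi) * (c (r0 + h) - c r0) / h
    = df o (upd W o xi) * ((c (r0 + h) - c r0) / h) by field.
exact: (He (_, _) (conj HA Hq)).
Qed.

Lemma chain_rule {n} (f : vec n -> R) df (gam : R -> vec n) (dgam : 'I_n -> R) r0 :
  partials f df -> (forall i, continuous (df i) (gam r0)) ->
  (forall i, derivable_pt_lim (fun r => gam r i) r0 (dgam i)) ->
  derivable_pt_lim (fun r => f (gam r)) r0 (\big[Rplus/0]_(i < n) (df i (gam r0) * dgam i)).
Proof.
move=> Hp Hc Hg.
pose z m r : vec n := fun j => if (j < m)%N then gam r j else gam r0 j.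
suff H m : (m <= n)%N -> derivable_pt_lim (fun r => f (z m r)) r0
    (\big[Rplus/0]_(i < n | (i < m)%N) (df i (gam r0) * dgam i)).
  have := H n (leqnn n); rewrite (eq_bigl xpredT) => [|i]; last exact: ltn_ord.
  have -> // : (fun r => f (z n r)) = fun r => f (gam r).
  apply: functional_extensionality => r; congr f.
  by apply: functional_extensionality => j; rewrite /z ltn_ord.
elim: m => [_|m IH Hm].
  by rewrite big_pred0 //; exact: (derivable_pt_lim_const (f (gam r0))).
set o : 'I_n := Ordinal Hm.
have z_next r : z m.+1 r = upd (z m r) o (gam r o).
  apply: functional_extensionality => j; rewrite /z /upd.
  case: (eqVneq j o) => [->|Nj]; first by rewrite /= ltnS leqnn.
  have Njm : nat_of_ord j != m by apply: contra_neq Nj => E; apply: val_inj.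
  by rewrite ltnS leq_eqVlt (negbTE Njm).
have z_fix r : z m r = upd (z m r) o (gam r0 o).
  by apply: functional_extensionality => j; rewrite /z /upd; case: eqP => [->|//]; rewrite ltnn.
have z_r0 : z m r0 = gam r0.
  by apply: functional_extensionality => j; rewrite /z; case: ifP.
have -> : (fun r => f (z m.+1 r)) = fun r =>
    (f (upd (z m r) o (gam r o)) - f (upd (z m r) o (gam r0 o))) + f (z m r).
  by apply: functional_extensionality => r; rewrite z_next -z_fix; ring.
rewrite (big_ord_lt_recr _ _ _ o).
apply: derivable_pt_lim_plus (IH (ltnW Hm)).
have := partial_increment_deriv f df (z m) o (fun r => gam r o) r0 (dgam o) Hp.
rewrite -z_fix z_r0; apply=> //.
apply: continuous_vec => j; rewrite /z; case: (j < m)%N; last exact: continuous_const.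
by apply: ex_derive_continuous; exists (dgam j); apply/is_derive_Reals.
Qed.

Lemma smooth_partials {n} (f : vec n -> R) : smooth f ->
  (forall x, continuous f x) /\ exists df, partials f df /\ forall i x, continuous (df i) x.
Proof.
move=> /(_ 1%N) [Hc Hd]; split; first exact/cont_vec_continuous.
have [df Hdf] := choice _ Hd.
exists df; split=> [i x|i]; first exact: (proj1 (Hdf i)).
exact/cont_vec_continuous/(proj2 (Hdf i)).
Qed.

(** * Dilations and the Euler derivative *)

Definition clamp (l : R) := Rmax (1/2) (Rmin 2 l).

Lemma clamp_cases l : (l < 1/2 /\ clamp l = 1/2) \/ (2 < l /\ clamp l = 2) \/
  (1/2 <= l <= 2 /\ clamp l = l).
Proof. by rewrite /clamp /Rmin; case: Rle_dec => h2; rewrite /Rmax; case: Rle_dec => h1; lra. Qed.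

Lemma clamp_range l : 1/2 <= clamp l <= 2.
Proof. by case: (clamp_cases l) => [[? ->]|[[? ->]|[? ->]]]; lra. Qed.

Lemma clamp_id l : 1/2 <= l <= 2 -> clamp l = l.
Proof. by case: (clamp_cases l) => [[? ->]|[[? ->]|[? ->]]]; lra. Qed.

Lemma clamp_lipschitz l l' : Rabs (clamp l - clamp l') <= Rabs (l - l').
Proof.
case: (clamp_cases l) => [[? ->]|[[? ->]|[? ->]]];
  by case: (clamp_cases l') => [[? ->]|[[? ->]|[? ->]]]; split_Rabs; lra.
Qed.

Lemma continuous_clamp l : continuous clamp l.
Proof.
apply/filterlim_locally => eps; exists eps => y Hy.
exact: Rle_lt_trans (clamp_lipschitz y l) Hy.
Qed.

Section Dilation.
Variables (n : nat) (nu : 'I_n -> R).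
Hypothesis nu_gt0 : forall i, 0 < nu i.

Lemma dil_dil a b x : 0 < a -> 0 < b -> dil nu a (dil nu b x) = dil nu (a * b) x.
Proof.
move=> Ha Hb; apply: functional_extensionality => i.
by rewrite /dil -Rmult_assoc Rpower_mult_distr.
Qed.

Lemma dil1 x : dil nu 1 x = x.
Proof. by apply: functional_extensionality => i; rewrite /dil Rpower_base_1 Rmult_1_l. Qed.

Lemma dil_vzero a : dil nu a (vzero n) = vzero n.
Proof. by apply: functional_extensionality => i; rewrite /dil /vzero Rmult_0_r. Qed.

Lemma continuous_dil {U : UniformSpace} (h : U -> R) (y : U -> vec n) u :
  0 < h u -> continuous h u -> continuous y u -> continuous (fun v => dil nu (h v) (y v)) u.
Proof.
move=> Hu Hh Hy; apply: continuous_vec => i.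
apply: (continuous_mult (fun v => Rpower (h v) (nu i)) (fun v => y v i)).
  exact: continuous_comp Hh (continuous_Rpower _ _ Hu).
exact: continuous_comp Hy (continuous_coord i _).
Qed.

Lemma nu_le_homdim i : nu i <= homdim nu.
Proof.
rewrite /homdim (bigD1 i) //= -{1}(Rplus_0_r (nu i)); apply: Rplus_le_compat_l.
by apply: (big_ind (fun x => 0 <= x)) => [|x y|j _]; [lra | lra | exact/Rlt_le/nu_gt0].
Qed.

Lemma dil_coord_lower_bound c i : 1/2 <= c -> 1 <= Rpower 2 (homdim nu) * Rpower c (nu i).
Proof.
move=> Hc; have Hnu := Rlt_le _ _ (nu_gt0 i).
have Hhalf : Rpower 2 (nu i) * Rpower (1/2) (nu i) = 1.
  rewrite Rpower_mult_distr; try lra.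
  by rewrite (_ : 2 * (1/2) = 1) ?Rpower_base_1 //; field.
rewrite -Hhalf; apply: Rmult_le_compat; try exact/Rlt_le/Rpower_gt0.
  exact: Rle_Rpower 2 _ _ ltac:(lra) (nu_le_homdim i).
exact: Rle_Rpower_l (1/2) c (nu i) Hnu ltac:(lra).
Qed.

Lemma LebInt_dil (g : vec n -> R) l I : 0 < l -> LebInt n g I ->
  LebInt n (fun x => g (dil nu l x)) (I / Rpower l (homdim nu)).
Proof.
move=> Hl Hg.
have := IntIter_vscale n (fun i => Rpower l (nu i)) g n (vzero n) I
  (fun i => Rpower_gt0 _ _) (leqnn n).
have -> : vscale (fun i => Rpower l (nu i)) (vzero n) = vzero n by exact: dil_vzero.
move=> /(_ Hg); congr (IntIter _ _ _ _ (_ / _)).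
rewrite (eq_bigl xpredT) => [|i]; last exact: ltn_ord.
by rewrite /homdim (big_morph (Rpower l) (fun a b => Rpower_plus a b l) (Rpower_O _ Hl)).
Qed.

(* [Ef] plays the role of |x| R f: d/dm f(D_m x) = Ef(D_m x) / m. *)
Definition dil_deriv_at (f Ef : vec n -> R) x := forall m, 0 < m ->
  derivable_pt_lim (fun l => f (dil nu l x)) m (Ef (dil nu m x) / m).

Lemma dil_deriv_at_mult f Ef h Eh x : dil_deriv_at f Ef x -> dil_deriv_at h Eh x ->
  dil_deriv_at (fun y => f y * h y) (fun y => Ef y * h y + f y * Eh y) x.
Proof.
move=> Hf Hh m Hm; set z := dil nu m x.
rewrite (_ : (Ef z * h z + f z * Eh z) / m = Ef z / m * h z + f z * (Eh z / m));
  last by field; lra.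
exact: derivable_pt_lim_mult _ _ _ _ _ (Hf m Hm) (Hh m Hm).
Qed.

Lemma dil_deriv_at_plus f Ef h Eh x : dil_deriv_at f Ef x -> dil_deriv_at h Eh x ->
  dil_deriv_at (fun y => f y + h y) (fun y => Ef y + Eh y) x.
Proof.
move=> Hf Hh m Hm; set z := dil nu m x.
rewrite (_ : (Ef z + Eh z) / m = Ef z / m + Eh z / m); last by field; lra.
exact: derivable_pt_lim_plus _ _ _ _ _ (Hf m Hm) (Hh m Hm).
Qed.

Lemma dil_deriv_at_ext f Ef f' Ef' x :
  (forall l, 0 < l -> f (dil nu l x) = f' (dil nu l x) /\ Ef (dil nu l x) = Ef' (dil nu l x)) ->
  dil_deriv_at f Ef x -> dil_deriv_at f' Ef' x.
Proof.
move=> E Hf m Hm; rewrite -(proj2 (E m Hm)).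
apply: derivable_pt_lim_ext_loc (Hf m Hm); apply: filter_imp (open_gt 0 m Hm) => l Hl.
exact: (proj1 (E l Hl)).
Qed.

Section DilationDerivative.
Variables (g Eg : vec n -> R) (B : R).
Hypothesis HB : 0 <= B.
Hypothesis g_cont : forall x, continuous g x.
Hypothesis Eg_cont : forall x, continuous Eg x.
Hypothesis g_dil : forall x, dil_deriv_at g Eg x.
Hypothesis g_supp : forall x, (exists i, B < Rabs (x i)) -> g x = 0 /\ Eg x = 0.

(* Clamping the dilation factor to [1/2, 2] gives all the quotients a common compact
   support. *)
Definition dil_quot (l : R) (x : vec n) : R :=
  if Req_EM_T (clamp l) 1 then Eg x else (g (dil nu (clamp l) x) - g x) / (clamp l - 1).

Lemma dil_quot_MVT c x : 1/2 <= c -> c <> 1 -> exists xi,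
  (g (dil nu c x) - g x) / (c - 1) = Eg (dil nu xi x) / xi /\ Rmin 1 c <= xi <= Rmax 1 c.
Proof.
move=> Hc Hc1.
case: (MVT_between (fun m => g (dil nu m x)) (fun m => Eg (dil nu m x) / m) 1 c).
  by move=> t ht; apply: g_dil; have := Rmin_glb 1 c (1/2) ltac:(lra) Hc; lra.
move=> xi [Exi Hxi]; exists xi; split=> //.
have Hxi0 : 0 < xi by have := Rmin_glb 1 c (1/2) ltac:(lra) Hc; lra.
by rewrite dil1 in Exi; rewrite Exi; field; split; lra.
Qed.

Lemma dil_quot_continuous_clamp1 l0 x0 : clamp l0 = 1 ->
  continuous (fun q : R_UniformSpace * vec n => dil_quot q.1 q.2) (l0, x0).
Proof.
move=> E.
have HK : continuous (fun q : R * vec n => Eg (dil nu q.1 q.2) / q.1) (1, x0).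
  apply: continuous_mult.
    apply: continuous_comp (Eg_cont _).
    by apply: continuous_dil; [rewrite /=; lra | exact: continuous_fst | exact: continuous_snd].
  by apply: continuous_comp (continuous_fst _ _) _; apply: continuous_Rinv; rewrite /=; lra.
have K1 y : Eg (dil nu 1 y) / 1 = Eg y by rewrite dil1 /Rdiv Rinv_1 Rmult_1_r.
apply/filterlim_locally => eps; case/filterlim_locally/(_ eps): HK => d Hd.
exists d => -[l y] [/= hl hy]; rewrite /=.
have -> : dil_quot l0 x0 = Eg x0 by rewrite /dil_quot; case: Req_EM_T => // /(_ E).
have Hd' q : ball (1, x0) d q -> ball (Eg x0) eps (Eg (dil nu q.1 q.2) / q.1).
  by move=> /Hd; rewrite /= K1.
rewrite /dil_quot; case: Req_EM_T => [El|NE'] /=.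
  by have := Hd' (1, y) (conj (ball_center _ _) hy); rewrite /= K1.
(* By the mean value theorem the quotient is a value of the continuous function
   (xi, y) |-> Eg (D_xi y) / xi, at some xi between 1 and clamp l. *)
case: (dil_quot_MVT (clamp l) y (proj1 (clamp_range l)) NE') => xi [-> Hxi].
apply: (Hd' (xi, y)); split=> //=.
apply/ball_Rabs; have := clamp_lipschitz l l0; rewrite E; move/ball_Rabs: hl; move: Hxi.
by rewrite /Rmin /Rmax; case: Rle_dec => _ ? ? ?; split_Rabs; lra.
Qed.

Lemma dil_quot_continuous_clamp_neq1 l0 x0 : clamp l0 <> 1 ->
  continuous (fun q : R_UniformSpace * vec n => dil_quot q.1 q.2) (l0, x0).
Proof.
move=> NE.
have Hd : 0 < Rabs (clamp l0 - 1) by apply: Rabs_pos_lt; lra.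
apply: (continuous_ext_loc _
  (fun q : R * vec n => (g (dil nu (clamp q.1) q.2) - g q.2) * / (clamp q.1 - 1))).
  exists (mkposreal _ Hd) => -[l y] [hl _]; rewrite /dil_quot /=.
  case: Req_EM_T => [El|//]; exfalso; have := clamp_lipschitz l l0; rewrite El.
  by move/ball_Rabs: hl => /= hl; split_Rabs; lra.
apply: continuous_mult; last first.
  apply: (continuous_comp fst (fun s => / (clamp s - 1))); first exact: continuous_fst.
  apply: continuous_Rinv_comp => [|/= H]; last by apply: NE; lra.
  exact: continuous_minus (continuous_clamp _) (continuous_const _ _).
apply: continuous_minus; last exact: continuous_comp (continuous_snd _ _) (g_cont _).
apply: continuous_comp (g_cont _).
apply: continuous_dil; first by have := clamp_range l0; rewrite /=; lra.
  exact: continuous_comp (continuous_fst _ _) (continuous_clamp _).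
exact: continuous_snd.
Qed.

Lemma dil_quot_continuous : jointly_continuous (dil_quot : R_UniformSpace -> _).
Proof.
move=> l0 x0; case: (Req_EM_T (clamp l0) 1).
  exact: dil_quot_continuous_clamp1.
exact: dil_quot_continuous_clamp_neq1.
Qed.

Lemma dil_quot_supp l x : (exists i, Rpower 2 (homdim nu) * B < Rabs (x i)) -> dil_quot l x = 0.
Proof.
move=> [i hi]; set c := clamp l; have Hc : 1/2 <= c <= 2 := clamp_range l.
have H2 : 1 <= Rpower 2 (homdim nu).
  by have := dil_coord_lower_bound 1 i ltac:(lra); rewrite Rpower_base_1 Rmult_1_r.
have Hx : exists i, B < Rabs (x i).
  exists i; apply: Rle_lt_trans hi; rewrite -{1}(Rmult_1_l B).
  exact: Rmult_le_compat_r.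
have Hdx : exists i, B < Rabs (dil nu c x i).
  exists i; rewrite /dil Rabs_mult Rabs_pos_eq; last exact/Rlt_le/Rpower_gt0.
  apply: Rle_lt_trans (Rmult_lt_compat_l _ _ _ (Rpower_gt0 c (nu i)) hi).
  rewrite -Rmult_assoc (Rmult_comm (Rpower c _)) -{1}(Rmult_1_l B).
  by apply: Rmult_le_compat_r => //; apply: dil_coord_lower_bound; lra.
rewrite /dil_quot; case: Req_EM_T => [e|ne] /=; first by case: (g_supp x Hx).
by rewrite (proj1 (g_supp _ Hdx)) (proj1 (g_supp x Hx)) Rminus_diag /Rdiv Rmult_0_l.
Qed.

Lemma LebInt_dil_deriv I J : LebInt n g I -> LebInt n Eg J -> J = - homdim nu * I.
Proof.
move=> HI HJ; set Q := homdim nu.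
have HB' : 0 <= Rpower 2 Q * B by have := Rpower_gt0 2 Q; nra.
case: (LebInt_param n dil_quot _ HB' dil_quot_continuous) => [l x|F [FC FI]].
  exact: dil_quot_supp.
have F1 : F 1 = J.
  apply: (IntIter_unique n n Eg (vzero n)) => //.
  apply: IntIter_ext (FI 1) => y; rewrite /dil_quot clamp_id; last lra.
  by case: Req_EM_T => [e|/(_ erefl) []].
have Fl l : l <> 1 -> Rabs (l - 1) < 1/2 ->
    F l = (I * Rpower l (- Q) - I * Rpower 1 (- Q)) / (l - 1).
  move=> Hl1 Hl; have Hl' : 1/2 <= l <= 2 by split_Rabs; lra.
  have HlQ := Rpower_gt0 l Q.
  apply: (IntIter_unique n n (dil_quot l) (vzero n)); first exact: FI.
  rewrite Rpower_base_1 Rpower_Ropp.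
  have -> : (I * / Rpower l Q - I * 1) / (l - 1)
      = / (l - 1) * (I / Rpower l Q) + - / (l - 1) * I by field; lra.
  apply: IntIter_ext (IntIter_lin _ _ _ _ _ _ _ _ _ (LebInt_dil g l I _ HI) HI) => [y|]; last lra.
  rewrite /dil_quot clamp_id //; case: Req_EM_T => [/Hl1 []|_] /=; field; lra.
rewrite -F1 Rmult_comm.
apply: (diff_quot_limit F (fun l => I * Rpower l (- Q)) 1 (1/2)) => //; first lra.
have := derivable_pt_lim_scal _ I 1 _ (derivable_pt_lim_power 1 (- Q) Rlt_0_1).
by rewrite Rpower_base_1 Rmult_1_r.
Qed.

End DilationDerivative.

End Dilation.

Arguments dil_deriv_at {n} nu f Ef x.

(** * Radial derivatives and the Hardy identity *)

Section Radial.
Variables (n : nat) (nu : 'I_n -> R) (N : vec n -> R).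
Hypothesis nu_gt0 : forall i, 0 < nu i.
Hypothesis N_cont : forall x, continuous N x.
Hypothesis N_ge0 : forall x, 0 <= N x.
Hypothesis N_dil : forall lam x, 0 < lam -> N (dil nu lam x) = lam * N x.
Hypothesis N_eq0 : forall x, N x = 0 <-> x = vzero n.

Lemma N_vzero : N (vzero n) = 0.
Proof. exact/N_eq0. Qed.

Lemma N_gt0 x : x <> vzero n -> 0 < N x.
Proof. by move=> Hx; case: (N_ge0 x) => // /esym /N_eq0. Qed.

Lemma dil_normalize x : x <> vzero n -> dil nu (N x) (dil nu (/ N x) x) = x.
Proof.
move=> /N_gt0 Hx; rewrite dil_dil //; last exact: Rinv_0_lt_compat.
by rewrite Rinv_r ?dil1 //; lra.
Qed.

Lemma dil_deriv_radial f Rf : radial_deriv nu N f Rf ->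
  forall x, dil_deriv_at nu f (fun y => N y * Rf y) x.
Proof.
move=> [_ HR] x m Hm; rewrite N_dil //.
rewrite (_ : m * N x * Rf (dil nu m x) / m = N x * Rf (dil nu m x)); last by field; lra.
case: (classic (x = vzero n)) => [->|Hx].
  rewrite N_vzero Rmult_0_l.
  apply: (derivable_pt_lim_ext_loc (fun _ => f (vzero n))); last exact: derivable_pt_lim_const.
  by apply: filter_forall => l; rewrite dil_vzero.
have HNx := N_gt0 x Hx.
have Hz : dil nu m x <> vzero n by move=> /N_eq0; rewrite N_dil //; nra.
have H1 := HR _ Hz.
have E : dil nu (/ (m * N x)) (dil nu m x) = dil nu (/ N x) x.
  rewrite dil_dil //; last exact/Rinv_0_lt_compat/Rmult_lt_0_compat.
  by congr dil; field; lra.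
rewrite N_dil // E in H1.
have := derivable_pt_lim_comp _ _ m _ _ (derivable_pt_lim_mul_r (N x) m) H1; rewrite Rmult_comm.
apply: derivable_pt_lim_ext_loc; apply: filter_imp (open_gt 0 m Hm) => l Hl.
rewrite /Ranalysis1.comp dil_dil; [|nra | exact/Rinv_0_lt_compat].
by rewrite (_ : l * N x * / N x = l) //; field; lra.
Qed.

Lemma radial_deriv_zero f Rf x : radial_deriv nu N f Rf -> locally x (fun y => f y = 0) ->
  Rf x = 0.
Proof.
move=> [HR0 HR] Hf; case: (classic (x = vzero n)) => [->//|Hx].
have HNx := N_gt0 x Hx.
apply: (uniqueness_limite _ (N x) _ _ (HR x Hx)).
apply: (derivable_pt_lim_ext_loc (fun _ => 0)); last exact: derivable_pt_lim_const.
have Hc : continuous (fun r => dil nu r (dil nu (/ N x) x)) (N x).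
  by apply: continuous_dil; [exact: HNx | exact: continuous_id | exact: continuous_const].
have := Hc (fun y => f y = 0); rewrite dil_normalize // /filtermap => /(_ Hf) H.
by apply: filter_imp H => r /esym.
Qed.

Lemma radial_deriv_formula f Rf df x : radial_deriv nu N f Rf -> partials f df ->
  (forall i y, continuous (df i) y) -> x <> vzero n ->
  Rf x = \big[Rplus/0]_(i < n) (nu i * x i * df i x / N x).
Proof.
move=> [_ HR] Hp Hc Hx; have HNx := N_gt0 x Hx.
set y := dil nu (/ N x) x.
have := chain_rule f df (fun r => dil nu r y) (fun i => nu i * Rpower (N x) (nu i - 1) * y i)
  (N x) Hp.
rewrite dil_normalize // => /(_ (fun i => Hc i x)) H.
rewrite (uniqueness_limite _ _ _ _ (HR x Hx) (H _)); last first.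
  by move=> i; apply: derivable_pt_lim_scal_right; exact: derivable_pt_lim_power.
apply: eq_bigr => i _.
have HNi := Rpower_gt0 (N x) (nu i).
by rewrite /y /dil Rpower_inv_base // Rpower_sub_1 //; field; lra.
Qed.

Lemma radial_deriv_continuous f Rf df : radial_deriv nu N f Rf -> partials f df ->
  (forall i y, continuous (df i) y) -> locally (vzero n) (fun y => f y = 0) ->
  forall x, continuous Rf x.
Proof.
move=> HR Hp Hc H0 x; case: (classic (x = vzero n)) => [->|Hx].
  apply: (continuous_ext_loc _ (fun _ => 0)); last exact: continuous_const.
  apply: filter_imp (locally_locally _ _ H0) => y Hy.
  by rewrite (radial_deriv_zero _ _ _ HR Hy).
have Hpos : locally x (fun y => 0 < N y).
  exact: (N_cont x (fun z => 0 < z) (open_gt 0 (N x) (N_gt0 x Hx))).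
apply: (continuous_ext_loc _ (fun y => \big[Rplus/0]_(i < n) (nu i * y i * df i y / N y))).
  apply: filter_imp Hpos => y Hy; symmetry; apply: (radial_deriv_formula f Rf df y HR Hp Hc) => E.
  by move: Hy; rewrite E N_vzero; lra.
apply: continuous_big_sum => i; rewrite /Rdiv.
apply: continuous_mult.
  apply: continuous_mult (Hc i x).
  exact: continuous_mult (continuous_const _ _) (continuous_coord i x).
apply: continuous_comp (N_cont x) _; apply: continuous_Rinv.
by have := N_gt0 x Hx; lra.
Qed.

Lemma Cc_radial_support f Rf : Cc_infty_punctured f -> radial_deriv nu N f Rf ->
  exists B r, 0 <= B /\ 0 < r /\ forall x, off_shell B r x -> f x = 0 /\ Rf x = 0.
Proof.
move=> [_ [B [r [Hr [HB Hf]]]]] HR; exists B, r; split; [lra | split=> // x Hx].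
split; first exact: Hf.
exact: (radial_deriv_zero _ _ _ HR (filter_imp _ _ Hf (off_shell_open B r x Hx))).
Qed.

Lemma continuous_Npow e x : x <> vzero n -> continuous (fun y => Rpower (N y) e) x.
Proof. by move=> Hx; apply: continuous_comp (N_cont x) (continuous_Rpower e _ (N_gt0 x Hx)). Qed.

Lemma continuous_div_Npow (h : vec n -> R) e x : x <> vzero n -> continuous h x ->
  continuous (fun y => h y / Rpower (N y) e) x.
Proof.
move=> Hx Hh; apply: continuous_mult Hh _.
apply: continuous_comp (continuous_Npow e x Hx) (continuous_Rinv _ _).
exact/Rgt_not_eq/Rpower_gt0.
Qed.

Lemma dil_deriv_at_Npow e x : x <> vzero n ->
  dil_deriv_at nu (fun y => Rpower (N y) e) (fun y => e * Rpower (N y) e) x.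
Proof.
move=> Hx m Hm; have HNx := N_gt0 x Hx.
apply: (derivable_pt_lim_ext_loc (fun l => Rpower (l * N x) e)).
  by apply: filter_imp (open_gt 0 m Hm) => l Hl; rewrite N_dil.
have := derivable_pt_lim_comp _ (fun s => Rpower s e) m _ _ (derivable_pt_lim_mul_r (N x) m)
  (derivable_pt_lim_power (m * N x) e ltac:(nra)).
rewrite N_dil // /Ranalysis1.comp.
rewrite Rpower_sub_1; last nra.
by rewrite (_ : e * (Rpower (m * N x) e / (m * N x)) * N x = e * Rpower (m * N x) e / m) //;
  field; lra.
Qed.

Section Hardy.
Variables (alpha B r : R) (u v Ru Rv : vec n -> R).
Hypothesis HB : 0 <= B.
Hypothesis Hr : 0 < r.
Hypothesis u_cont : forall x, continuous u x.
Hypothesis v_cont : forall x, continuous v x.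
Hypothesis Ru_cont : forall x, continuous Ru x.
Hypothesis Rv_cont : forall x, continuous Rv x.
Hypothesis u_dil : forall x, dil_deriv_at nu u (fun y => N y * Ru y) x.
Hypothesis v_dil : forall x, dil_deriv_at nu v (fun y => N y * Rv y) x.
Hypothesis vanish : forall x, off_shell B r x -> (u x = 0 /\ Ru x = 0) /\ (v x = 0 /\ Rv x = 0).

Definition hardy_grad x := (Ru x / Rpower (N x) alpha) ^ 2 + (Rv x / Rpower (N x) alpha) ^ 2.
Definition hardy_mass x :=
  (u x / Rpower (N x) (alpha + 1)) ^ 2 + (v x / Rpower (N x) (alpha + 1)) ^ 2.
Definition hardy_cross x := (u x * Ru x + v x * Rv x) / Rpower (N x) (2 * alpha + 1).

Lemma vanish_or_N_gt0 x : ((u x = 0 /\ Ru x = 0) /\ (v x = 0 /\ Rv x = 0)) \/ 0 < N x.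
Proof.
case: (classic (x = vzero n)) => [->|Hx]; last by right; exact: N_gt0.
by left; apply/vanish/off_shell_vzero.
Qed.

Lemma Rpower_hardy_exponents a : 0 < a ->
  [/\ Rpower a alpha = Rpower a (alpha + 1) / a,
      Rpower a (2 * alpha + 1) = Rpower a (alpha + 1) * Rpower a (alpha + 1) / a &
      Rpower a (- (2 * alpha + 2)) = / (Rpower a (alpha + 1) * Rpower a (alpha + 1))].
Proof.
move=> Ha; split.
- by rewrite Rpower_plus Rpower_1 //; field; lra.
- rewrite -Rpower_plus (_ : alpha + 1 + (alpha + 1) = 2 * alpha + 1 + 1); last ring.
  by rewrite (Rpower_plus (2 * alpha + 1) 1) Rpower_1 //; field; lra.
- by rewrite Rpower_Ropp -Rpower_plus; congr (/ Rpower a _); ring.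
Qed.

Lemma hardy_integrands_vanish x : off_shell B r x ->
  [/\ hardy_grad x = 0, hardy_mass x = 0 & hardy_cross x = 0].
Proof.
move/vanish=> [[u0 Ru0] [v0 Rv0]].
by rewrite /hardy_grad /hardy_mass /hardy_cross u0 v0 Ru0 Rv0 /Rdiv; split; ring.
Qed.

Lemma continuous_hardy_grad x : continuous hardy_grad x.
Proof.
apply: (continuous_off_vzero _ B r Hr) => [{}x Hx|{}x /hardy_integrands_vanish []//].
by apply: continuous_plus; apply: continuous_sq; apply: continuous_div_Npow.
Qed.

Lemma continuous_hardy_mass x : continuous hardy_mass x.
Proof.
apply: (continuous_off_vzero _ B r Hr) => [{}x Hx|{}x /hardy_integrands_vanish []//].
by apply: continuous_plus; apply: continuous_sq; apply: continuous_div_Npow.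
Qed.

Lemma continuous_hardy_cross x : continuous hardy_cross x.
Proof.
apply: (continuous_off_vzero _ B r Hr) => [{}x Hx|{}x /hardy_integrands_vanish []//].
by apply: continuous_div_Npow => //; apply: continuous_plus; apply: continuous_mult.
Qed.

Lemma dil_deriv_hardy_mass x :
  dil_deriv_at nu hardy_mass (fun y => 2 * hardy_cross y - (2 * alpha + 2) * hardy_mass y) x.
Proof.
(* At [vzero] the product rule is unavailable, [Rpower (N _) _] taking the junk value
   [Rpower 0 _ = 1]; but there the orbit is constant and both sides vanish. *)
case: (classic (x = vzero n)) => [->|Hx].
  case: (hardy_integrands_vanish _ (off_shell_vzero B r Hr)) => _ m0 c0 m Hm.
  rewrite dil_vzero m0 c0 (_ : (2 * 0 - (2 * alpha + 2) * 0) / m = 0); last by field; lra.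
  apply: (derivable_pt_lim_ext_loc (fun _ => 0)); last exact: derivable_pt_lim_const.
  by apply: filter_forall => l; rewrite dil_vzero m0.
set pw := fun y => Rpower (N y) (- (2 * alpha + 2)).
apply: (dil_deriv_at_ext n nu (fun y => (u y * u y + v y * v y) * pw y)
  (fun y => ((N y * Ru y * u y + u y * (N y * Ru y)) + (N y * Rv y * v y + v y * (N y * Rv y)))
    * pw y + (u y * u y + v y * v y) * (- (2 * alpha + 2) * pw y))).
  move=> l Hl; have Hz : dil nu l x <> vzero n.
    by move=> /N_eq0; rewrite N_dil //; have := N_gt0 x Hx; nra.
  have Ha := N_gt0 _ Hz; case: (Rpower_hardy_exponents _ Ha) => _ E2 E3.
  have HP := Rpower_gt0 (N (dil nu l x)) (alpha + 1).
  rewrite /pw /hardy_mass /hardy_cross E2 E3; split; field; lra.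
apply: dil_deriv_at_mult; last exact: dil_deriv_at_Npow.
by apply: dil_deriv_at_plus; apply: dil_deriv_at_mult.
Qed.


Lemma LebInt_hardy_cross I2 Ic : LebInt n hardy_mass I2 -> LebInt n hardy_cross Ic ->
  2 * Ic = (2 * alpha + 2 - homdim nu) * I2.
Proof.
move=> H2 Hc.
suff : 2 * Ic + - (2 * alpha + 2) * I2 = - homdim nu * I2 by lra.
apply: (LebInt_dil_deriv n nu nu_gt0 hardy_mass _ B HB continuous_hardy_mass _
  dil_deriv_hardy_mass) => //.
- move=> x; apply: continuous_minus; apply: continuous_mult;
    by [exact: continuous_const | exact: continuous_hardy_cross | exact: continuous_hardy_mass].
- move=> x Hx; case: (hardy_integrands_vanish x (or_introl Hx)) => _ -> ->; split=> //; ring.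
- by apply: IntIter_ext (IntIter_lin _ _ _ _ _ _ _ _ _ Hc H2) => x; ring.
Qed.

Lemma hardy_square_expand c x :
  (Ru x / Rpower (N x) alpha + c / (2 * Rpower (N x) (alpha + 1)) * u x) ^ 2
    + (Rv x / Rpower (N x) alpha + c / (2 * Rpower (N x) (alpha + 1)) * v x) ^ 2
  = hardy_grad x + c * hardy_cross x + (c / 2) ^ 2 * hardy_mass x.
Proof.
rewrite /hardy_grad /hardy_cross /hardy_mass.
case: (vanish_or_N_gt0 x) => [[[-> ->] [-> ->]]|Ha]; first by rewrite /Rdiv; ring.
case: (Rpower_hardy_exponents _ Ha) => -> -> _.
have HP := Rpower_gt0 (N x) (alpha + 1).
by field; split; lra.
Qed.

Lemma hardy_identity : exists I1 I2 I3 : R,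
  LebInt n (fun x => (Ru x / Rpower (N x) alpha) ^ 2 + (Rv x / Rpower (N x) alpha) ^ 2) I1 /\
  LebInt n (fun x => (u x / Rpower (N x) (alpha + 1)) ^ 2
                   + (v x / Rpower (N x) (alpha + 1)) ^ 2) I2 /\
  LebInt n (fun x =>
      (Ru x / Rpower (N x) alpha
         + (homdim nu - 2 - 2 * alpha) / (2 * Rpower (N x) (alpha + 1)) * u x) ^ 2
    + (Rv x / Rpower (N x) alpha
         + (homdim nu - 2 - 2 * alpha) / (2 * Rpower (N x) (alpha + 1)) * v x) ^ 2) I3 /\
  I1 - ((homdim nu - 2) / 2 - alpha) ^ 2 * I2 = I3.
Proof.
have [I1 H1] : exists I, LebInt n hardy_grad I.
  by apply: (LebInt_off_shell _ B r HB continuous_hardy_grad) => x /hardy_integrands_vanish [].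
have [I2 H2] : exists I, LebInt n hardy_mass I.
  by apply: (LebInt_off_shell _ B r HB continuous_hardy_mass) => x /hardy_integrands_vanish [].
have [Ic Hc] : exists I, LebInt n hardy_cross I.
  by apply: (LebInt_off_shell _ B r HB continuous_hardy_cross) => x /hardy_integrands_vanish [].
have E := LebInt_hardy_cross _ _ H2 Hc.
set c := homdim nu - 2 - 2 * alpha.
exists I1, I2, (1 * (1 * I1 + c * Ic) + (c / 2) ^ 2 * I2); do 2 split=> //; split.
  apply: IntIter_ext (IntIter_lin _ _ _ _ _ _ _ _ _ (IntIter_lin _ _ _ _ _ _ _ _ _ H1 Hc) H2).
  by move=> x; rewrite hardy_square_expand; ring.
have -> : Ic = (2 * alpha + 2 - homdim nu) / 2 * I2 by lra.
by rewrite /c; field.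
Qed.

End Hardy.
End Radial.

(* complex-valued f = u + i v; Rf = Ru + i Rv *)
Theorem theorem2p1 (n : nat) (mul : vec n -> vec n -> vec n) (inv : vec n -> vec n)
  (nu : 'I_n -> R) (N : vec n -> R)
  (HG : homogeneous_group mul inv nu) (HQ : 3 <= homdim nu)
  (HN : hom_quasi_norm inv nu N)
  (u v Ru Rv : vec n -> R)
  (Hu : Cc_infty_punctured u) (Hv : Cc_infty_punctured v)
  (HRu : radial_deriv nu N u Ru) (HRv : radial_deriv nu N v Rv)
  (alpha : R) :
  let Q := homdim nu in
  exists I1 I2 I3 : R,
    LebInt n (fun x => (Ru x / Rpower (N x) alpha) ^ 2
                     + (Rv x / Rpower (N x) alpha) ^ 2) I1 /\
    LebInt n (fun x => (u x / Rpower (N x) (alpha + 1)) ^ 2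
                     + (v x / Rpower (N x) (alpha + 1)) ^ 2) I2 /\
    LebInt n (fun x =>
        (Ru x / Rpower (N x) alpha
           + (Q - 2 - 2 * alpha) / (2 * Rpower (N x) (alpha + 1)) * u x) ^ 2
      + (Rv x / Rpower (N x) alpha
           + (Q - 2 - 2 * alpha) / (2 * Rpower (N x) (alpha + 1)) * v x) ^ 2) I3 /\
    I1 - ((Q - 2) / 2 - alpha) ^ 2 * I2 = I3.
Proof.
move=> Q.
case: HG => _ [_ [_ [_ [_ [nu_gt0 _]]]]].
case: HN => /cont_vec_continuous N_cont [N_ge0 [_ [N_dil N_eq0]]].
have [u_cont [du [Hdu du_cont]]] := smooth_partials u (proj1 Hu).
have [v_cont [dv [Hdv dv_cont]]] := smooth_partials v (proj1 Hv).
have [B [r [HB [Hr vanish]]]] := off_shell_and _ _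
  (Cc_radial_support n nu N N_ge0 N_eq0 u Ru Hu HRu)
  (Cc_radial_support n nu N N_ge0 N_eq0 v Rv Hv HRv).
apply: (hardy_identity n nu N nu_gt0 N_cont N_ge0 N_dil N_eq0 alpha B r u v Ru Rv HB Hr
  u_cont v_cont) => [||x|x|//].
- apply: (radial_deriv_continuous n nu N N_cont N_ge0 N_eq0 u Ru du) => //.
  by apply: (vanish_near_vzero _ B r Hr) => x /vanish [[]].
- apply: (radial_deriv_continuous n nu N N_cont N_ge0 N_eq0 v Rv dv) => //.
  by apply: (vanish_near_vzero _ B r Hr) => x /vanish [_ []].
- exact: dil_deriv_radial.
- exact: dil_deriv_radial.
Qed.
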